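(* For every integer $m\ge2$ and every graph $G$, $\hom(S_{2,1^0};G)\cdot\hom(S_{2,1^{m-2}};G)^2\ge \hom(S_{2,1^{m-1}};G)^2$.
   Context: All graphs are finite; $\hom(H;G)$ is the number of graph homomorphisms from $H$ to $G$. For $k\ge0$, $S_{2,1^k}$ is the tree with vertex set $\{1,\ldots,k+3\}$ and edge set $\{\{1,j\}:2\le j\le k+2\}\cup\{\{k+2,k+3\}\}$. *)

From mathcomp Require Import all_boot all_order.
Set Implicit Arguments. Unset Strict Implicit. Unset Printing Implicit Defensive.

Definition simple_graph (V : finType) (e : rel V) : Prop :=
  symmetric e /\ irreflexive e.

Definition hom (VH : finType) (eH : rel VH) (VG : finType) (eG : rel VG) : nat :=
  #|[set f : {ffun VH -> VG} | [forall x, forall y, eH x y ==> eG (f x) (f y)]]|.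

(* S_{2,1^k}: vertices {1,...,k+3} encoded as 'I_(k+3) via j |-> j-1.
   Edges {1,j} (2 <= j <= k+2) become {0,j'} (1 <= j' <= k+1), and the edge
   {k+2,k+3} becomes {k+1,k+2}. *)
Definition S21_edge (k : nat) (a b : nat) : bool :=
  ((a == 0) && (1 <= b <= k.+1)) || ((a == k.+1) && (b == k.+2)).

Definition S21_rel (k : nat) : rel 'I_(k + 3) :=
  fun x y => S21_edge k x y || S21_edge k y x.

Definition homS21 (k : nat) (VG : finType) (eG : rel VG) : nat :=
  @hom _ (@S21_rel k) _ eG.

From mathcomp Require Import all_boot all_order.
From mathcomp Require Import zify.
Set Implicit Arguments. Unset Strict Implicit. Unset Printing Implicit Defensive.

(* Let D be the maximum degree of G.  Deleting one of the leaves adjacent to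
   the centre of S_{2,1^(k+1)} gives S_{2,1^k}, and a homomorphism of the
   smaller tree extends to the deleted leaf in at most D ways, so
   hom(S_{2,1^(k+1)};G) <= D * hom(S_{2,1^k};G).  On the other hand
   S_{2,1^0} is the path with three vertices, and sending its middle vertex to
   a vertex of degree D already gives D^2 homomorphisms.  Squaring the first
   bound and inserting the second yields the theorem. *)

Definition maxdeg (V : finType) (e : rel V) : nat :=
  \max_(v : V) #|[set u | e v u]|.

Lemma card_dep_pairs (T U : finType) (B : {set T}) (N : T -> {set U}) :
  #|[set p : T * U | (p.1 \in B) && (p.2 \in N p.1)]| = \sum_(x in B) #|N x|.
Proof.
rewrite -sum1_card; under [RHS]eq_bigr => x _ do rewrite -sum1_card.
by rewrite pair_big_dep /=; apply: eq_bigl => -[x u]; rewrite !inE.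
Qed.

Lemma S21_edge_bump k x y :
  S21_edge k x y -> S21_edge k.+1 (bump 1 x) (bump 1 y).
Proof.
rewrite /S21_edge /bump.
case/orP => [/andP[/eqP-> /andP[x_ge1 x_le]] | /andP[/eqP-> /eqP->]]; apply/orP.
  by left; rewrite /= x_ge1; apply/andP; split; lia.
by right; apply/andP; split; apply/eqP; lia.
Qed.

Section LeafDeletion.
Variables (V : finType) (e : rel V) (k : nat).

Let leaf : 'I_(k.+1 + 3) := Ordinal (ltn_addl k.+1 (isT : 1 < 3)).
Let centre : 'I_(k.+1 + 3) := Ordinal (ltn_addl k.+1 (isT : 0 < 3)).
Let centre' : 'I_(k + 3) := Ordinal (ltn_addl k (isT : 0 < 3)).

Lemma S21_rel_lift (x y : 'I_(k + 3)) :
  S21_rel x y -> S21_rel (lift leaf x) (lift leaf y).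
Proof. by rewrite /S21_rel => /orP[] /S21_edge_bump ->; rewrite ?orbT. Qed.

Definition delete_leaf (f : {ffun 'I_(k.+1 + 3) -> V}) :
  {ffun 'I_(k + 3) -> V} * V :=
  ([ffun j => f (lift leaf j)], f leaf).

Lemma delete_leaf_inj : injective delete_leaf.
Proof.
move=> f f' [/ffunP eq_lift eq_leaf]; apply/ffunP => i.
case: (unliftP leaf i) => [j -> | ->] //.
by have := eq_lift j; rewrite !ffunE.
Qed.

Lemma homS21S_le : homS21 k.+1 e <= maxdeg e * homS21 k e.
Proof.
rewrite /homS21 /hom.
set A := [set f | _]; set B := [set f | _].
pose N (h : {ffun 'I_(k + 3) -> V}) := [set u | e (h centre') u].
have card_A : #|A| <= #|[set p | (p.1 \in B) && (p.2 \in N p.1)]|.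
  rewrite -(card_imset _ delete_leaf_inj); apply: subset_leq_card.
  apply/subsetP => _ /imsetP[f + ->]; rewrite [f \in A]inE => /forallP f_hom.
  have f_edge x y : S21_rel x y -> e (f x) (f y).
    by move=> xy; move: (f_hom x) => /forallP/(_ y)/implyP; apply.
  rewrite !inE /= ffunE; apply/andP; split.
    apply/forallP => x; apply/forallP => y; apply/implyP => xy.
    by rewrite !ffunE; apply/f_edge/S21_rel_lift.
  have -> : lift leaf centre' = centre by apply: val_inj.
  exact: f_edge.
rewrite (leq_trans card_A) // card_dep_pairs mulnC -sum_nat_const.
by apply: leq_sum => h _; exact: (@leq_bigmax _ (fun v => #|[set u | e v u]|)).
Qed.

End LeafDeletion.

Lemma card_nbhd_sq_le_homS21_0 (V : finType) (e : rel V) (v : V) :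
  symmetric e -> #|[set u | e v u]| * #|[set u | e v u]| <= homS21 0 e.
Proof.
move=> e_sym.
pose path_at (p : V * V) : {ffun 'I_(0 + 3) -> V} :=
  [ffun i : 'I_(0 + 3) => if val i == 1 then v else if val i == 0 then p.1 else p.2].
have path_at_inj : injective path_at.
  move=> [x y] [x' y'] /ffunP eq_path.
  have := eq_path (@Ordinal 3 0 isT); have := eq_path (@Ordinal 3 2 isT).
  by rewrite !ffunE /= => -> ->.
rewrite -cardsX -(card_imset _ path_at_inj); apply: subset_leq_card.
apply/subsetP => _ /imsetP[[x y] + ->]; rewrite !inE /= => /andP[vx vy].
apply/forallP => i; apply/forallP => j; apply/implyP.
rewrite /S21_rel /S21_edge !ffunE; case: i j => [n n_lt] [m m_lt] /=.
by case: n n_lt => [|[|[|n]]] n_lt; case: m m_lt => [|[|[|m]]] m_lt //= _;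
  rewrite e_sym.
Qed.

Lemma maxdeg_sq_le_homS21_0 (V : finType) (e : rel V) :
  symmetric e -> maxdeg e * maxdeg e <= homS21 0 e.
Proof.
move=> e_sym; case: (posnP #|V|) => [V0 | V_gt0].
  suff -> : maxdeg e = 0 by [].
  by apply/eqP; rewrite -leqn0; apply/bigmax_leqP => v; have := card0_eq V0 v.
rewrite /maxdeg; have [v ->] := eq_bigmax (fun v => #|[set u | e v u]|) V_gt0.
exact: card_nbhd_sq_le_homS21_0.
Qed.

Theorem theorem3p3 (m : nat) (V : finType) (e : rel V) :
  2 <= m -> simple_graph e ->
  homS21 (m - 1) e ^ 2 <= homS21 0 e * homS21 (m - 2) e ^ 2.
Proof.
move=> m_ge2 [e_sym _].
have -> : m - 1 = (m - 2).+1 by lia.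
have leaf_bound := homS21S_le e (m - 2).
rewrite !expnS !expn0 !muln1.
apply: (leq_trans (leq_mul leaf_bound leaf_bound)).
by rewrite mulnACA leq_mul2r maxdeg_sq_le_homS21_0 ?orbT.
Qed.
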